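(* Fix $\beta>2$ and let $F_\beta(\mathbf{x},r)$, $r_1^\beta<r_2^\beta$, $y_1^\beta(r)$, $u_\beta(r)$, $\boldsymbol{\sigma}_1^\beta(r)$, $\boldsymbol{\sigma}_2^\beta(r)$, $\mathbf{p}^\beta(r)$ be as in the context. For $r\in(0,r_1^\beta)\cup(r_1^\beta,r_2^\beta)$ define $$\mathbf{l}_\beta(r)=\begin{cases}\{\mathbf{x}: x_1+x_2=H_\beta(y_1^\beta(r))+K_\beta(y_1^\beta(r))\}\cap\Xi & r\in(0,r_1^\beta),\\ \{\mathbf{x}: x_1+x_2=2u_\beta(r)\}\cap\Xi & r\in(r_1^\beta,r_2^\beta).\end{cases}$$ Then the restriction of $F_\beta(\cdot,r)$ to $\mathbf{l}_\beta(r)$ attains its minimum only at $\boldsymbol{\sigma}_1^\beta(r)$ and $\boldsymbol{\sigma}_2^\beta(r)$ if $r\in(0,r_1^\beta)$, and only at $\mathbf{p}^\beta(r)$ if $r\in(r_1^\beta,r_2^\beta)$.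
   Context: $\Xi=\{(x_1,x_2): x_1,x_2\ge0,\ x_1+x_2\le1\}$, $x_0=1-x_1-x_2$, $\mathbf{v}_k=(\cos(2\pi k/3),\sin(2\pi k/3))$, $F_\beta(\mathbf{x},r)=-\frac12|\sum_{k=0}^2x_k\mathbf{v}_k|^2+\frac1\beta\sum_{k=0}^2x_k\log(3x_k)+r\,x_0-\frac r2(x_1+x_2)$ (external field of magnitude $r$, angle $\pi$), with $0\log0=0$. Let $h(t)=-3t(1-2t)\log\frac{1-2t}{t}-3t+1$, $f_r(t)=\frac{2}{3(1-r-3t)}\log\frac{1-2t}{t}$, $k_r=(1-r)/3$; for $0<r<1$, $m_0(r)$ is the unique solution in $(0,k_r)$ of $h(t)=r$; $r_2^\beta$ is the unique $r\in(0,1)$ with $f_r(m_0(r))=\beta$; $r_1^\beta=1-\frac2\beta-\frac{2}{3\beta}\log(\frac{3\beta}2-2)$. For $r\in(0,r_2^\beta)$, $u_\beta(r)$ is the unique solution of $f_r(t)=\beta$ in $(m_0(r),k_r)$ and $\mathbf{p}^\beta(r)=(u_\beta(r),u_\beta(r))$. Let $G_\beta(x)=\frac1\beta\log x-\frac32x$, $l_\beta=2/(3\beta)$, $g_\beta=G_\beta(l_\beta)$; for $y<g_\beta$, $H_\beta(y)<l_\beta<K_\beta(y)$ solve $G_\beta(x)=y$, and $H_\beta(g_\beta)=K_\beta(g_\beta)=l_\beta$. For $r\le r_1^\beta$, $y_1^\beta(r)$ is the unique $y\le g_\beta$ with $K_\beta(y-3r/2)+H_\beta(y)+K_\beta(y)=1$;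 $\boldsymbol{\sigma}_1^\beta(r)=(K_\beta(y_1^\beta(r)),H_\beta(y_1^\beta(r)))$ and $\boldsymbol{\sigma}_2^\beta(r)=(H_\beta(y_1^\beta(r)),K_\beta(y_1^\beta(r)))$. *)

From Stdlib Require Import Reals Lra ClassicalEpsilon.
Open Scope R_scope.

(* "the unique x with P x": a chosen witness of P (well-defined, and equal to
   the unique solution whenever the paper's uniqueness claim holds). *)
Definition the (P : R -> Prop) : R := epsilon (inhabits 0) P.

(* Points x = (x1, x2); x0 = 1 - x1 - x2. *)
Definition pt := (R * R)%type.

Definition Xi (x : pt) : Prop :=
  0 <= fst x /\ 0 <= snd x /\ fst x + snd x <= 1.

(* x log(3x) with the convention 0 log 0 = 0 *)
Definition xlog3x (t : R) : R := if Rle_dec t 0 then 0 else t * ln (3 * t).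

Definition vx (k : R) : R := cos (2 * PI * k / 3).
Definition vy (k : R) : R := sin (2 * PI * k / 3).

Definition F (beta : R) (x : pt) (r : R) : R :=
  let x1 := fst x in let x2 := snd x in let x0 := 1 - x1 - x2 in
  let sx := x0 * vx 0 + x1 * vx 1 + x2 * vx 2 in
  let sy := x0 * vy 0 + x1 * vy 1 + x2 * vy 2 in
  - / 2 * (sx ^ 2 + sy ^ 2)
  + / beta * (xlog3x x0 + xlog3x x1 + xlog3x x2)
  + r * x0 - r / 2 * (x1 + x2).

Definition h (t : R) : R := -3 * t * (1 - 2 * t) * ln ((1 - 2 * t) / t) - 3 * t + 1.
Definition f (r t : R) : R := 2 / (3 * (1 - r - 3 * t)) * ln ((1 - 2 * t) / t).
Definition k (r : R) : R := (1 - r) / 3.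

Definition m0 (r : R) : R := the (fun t => 0 < t < k r /\ h t = r).
Definition r2 (beta : R) : R := the (fun r => 0 < r < 1 /\ f r (m0 r) = beta).
Definition r1 (beta : R) : R :=
  1 - 2 / beta - 2 / (3 * beta) * ln (3 * beta / 2 - 2).
Definition u (beta r : R) : R := the (fun t => m0 r < t < k r /\ f r t = beta).
Definition p (beta r : R) : pt := (u beta r, u beta r).

Definition G (beta x : R) : R := / beta * ln x - 3 / 2 * x.
Definition l (beta : R) : R := 2 / (3 * beta).
Definition g (beta : R) : R := G beta (l beta).
Definition H (beta y : R) : R := the (fun x => 0 < x <= l beta /\ G beta x = y).
Definition K (beta y : R) : R := the (fun x => l beta <= x /\ G beta x = y).

Definition y1 (beta r : R) : R :=
  the (fun y => y <= g beta /\
        K beta (y - 3 * r / 2) + H beta y + K beta y = 1).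

Definition sigma1 (beta r : R) : pt := (K beta (y1 beta r), H beta (y1 beta r)).
Definition sigma2 (beta r : R) : pt := (H beta (y1 beta r), K beta (y1 beta r)).

Definition lline1 (beta r : R) (x : pt) : Prop :=
  Xi x /\ fst x + snd x = H beta (y1 beta r) + K beta (y1 beta r).
Definition lline2 (beta r : R) (x : pt) : Prop :=
  Xi x /\ fst x + snd x = 2 * u beta r.

Definition is_argmin (S : pt -> Prop) (phi : pt -> R) (x : pt) : Prop :=
  S x /\ forall z, S z -> phi x <= phi z.

From Pilot Require Import Defs.
From Stdlib Require Import Reals Lra Ranalysis5 ClassicalEpsilon.
From Coquelicot Require Import Coquelicot.
Open Scope R_scope.

(* On the line x1 + x2 = 2a put x1 = a + d, x2 = a - d.  There F is a
   function of a plus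
     Fdiff a d = -3/2 d^2 + (phi (a + d) + phi (a - d)) / beta,
   phi x = x log 3x, with d-derivative Gdiff a d = G (a + d) - G (a - d),
   whose own d-derivative has the sign of d^2 - a (a - l).  So for a <= l,
   Gdiff > 0 on (0, a) and d = 0 is the unique minimiser, while for a > l a
   zero dm of Gdiff in (0, a) is unique and the minimisers are d = +-dm.  The
   endpoints d = +-a never minimise since phi has infinite slope at 0.
   For r < r1 the equation defining y1 puts H (y1) < l < K (y1) on one level
   of G, so Gdiff vanishes at dm = (K - H) / 2: this gives sigma1, sigma2.
   For r1 < r < r2, f_r(t) = beta means r = 1 - 3t - l log ((1 - 2t) / t), a
   decreasing function of t on [tstar, 1/3] equal to r2 at tstar and to r1
   at l; hence u <= l and the minimiser is p. *)

Lemma ln_le_sub1 z : 0 < z -> ln z <= z - 1.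
Proof.
  intros Hz. destruct (Req_dec z 1) as [->|Hz1]; [rewrite ln_1; lra|].
  assert (Hexp := exp_ineq1 (z - 1) ltac:(lra)).
  rewrite <- (exp_ln z) in Hexp at 1 by lra.
  left. apply exp_lt_inv. lra.
Qed.

Lemma ln_ge_1_sub_inv z : 0 < z -> 1 - / z <= ln z.
Proof.
  intros Hz. assert (Hinv := ln_le_sub1 (/ z) (Rinv_0_lt_compat z Hz)).
  rewrite ln_Rinv in Hinv by lra. lra.
Qed.

Lemma deriv_pos_incr (f df : R -> R) a b : a < b ->
  (forall c, a <= c <= b -> derivable_pt_lim f c (df c)) ->
  (forall c, a < c < b -> 0 < df c) -> f a < f b.
Proof.
  intros Hab Hd Hpos.
  destruct (MVT_cor2 f df a b Hab Hd) as [c [Hc Hmvt]].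
  assert (0 < df c * (b - a)) by (apply Rmult_lt_0_compat; [apply Hpos|]; lra).
  lra.
Qed.

Lemma deriv_neg_decr (f df : R -> R) a b : a < b ->
  (forall c, a <= c <= b -> derivable_pt_lim f c (df c)) ->
  (forall c, a < c < b -> df c < 0) -> f b < f a.
Proof.
  intros Hab Hd Hneg.
  enough (- f a < - f b) by lra.
  apply (deriv_pos_incr (fun t => - f t) (fun t => - df t)); auto.
  - intros c Hc. apply derivable_pt_lim_opp, Hd, Hc.
  - intros c Hc. specialize (Hneg c Hc). lra.
Qed.

Lemma derivable_pt_lim_continuity_pt f x d :
  derivable_pt_lim f x d -> continuity_pt f x.
Proof. intros Hd. apply derivable_continuous_pt. exists d. exact Hd. Qed.

Lemma IVT_incr (f : R -> R) x y c : x < y ->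
  (forall a, x <= a <= y -> continuity_pt f a) -> f x < c < f y ->
  exists z, x < z < y /\ f z = c.
Proof.
  intros Hxy Hc Hfc.
  destruct (IVT_interv (fun t => f t - c) x y) as [z [Hz Hfz]]; try lra.
  - intros a Ha. apply continuity_pt_minus; [now apply Hc|apply continuity_pt_const].
    intros ? ?; reflexivity.
  - exists z. destruct (Req_dec z x) as [->|Hzx]; [lra|].
    destruct (Req_dec z y) as [->|Hzy]; [lra|]. split; lra.
Qed.

Lemma IVT_decr (f : R -> R) x y c : x < y ->
  (forall a, x <= a <= y -> continuity_pt f a) -> f y < c < f x ->
  exists z, x < z < y /\ f z = c.
Proof.
  intros Hxy Hc Hfc.
  destruct (IVT_incr (fun t => - f t) x y (- c)) as [z [Hz Hfz]]; try lra.
  - intros a Ha. apply continuity_pt_opp, Hc, Ha.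
  - exists z. split; [exact Hz|lra].
Qed.

Lemma continuity_pt_inverse (f g : R -> R) (D : R -> Prop) y0 delta :
  0 < delta ->
  (forall x, g y0 - delta < x < g y0 + delta -> D x) ->
  f (g y0) = y0 ->
  (forall x x', D x -> D x' -> x < x' -> f x < f x') ->
  (forall x x' y, D x -> D x' -> f x <= y <= f x' -> D (g y) /\ f (g y) = y) ->
  continuity_pt g y0.
Proof.
  intros Hdelta HD Hfx0 Hincr Hinv.
  set (x0 := g y0) in *.
  intros eps Heps.
  set (e := Rmin eps delta / 2).
  assert (He : 0 < e < eps /\ e < delta).
  { assert (Rmin eps delta <= eps) by apply Rmin_l.
    assert (Rmin eps delta <= delta) by apply Rmin_r.
    assert (0 < Rmin eps delta) by (apply Rmin_glb_lt; lra).
    unfold e; lra. }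
  destruct He as [[He0 Heps'] Hedelta].
  assert (Dl : D (x0 - e)) by (apply HD; lra).
  assert (Dr : D (x0 + e)) by (apply HD; lra).
  assert (Dx0 : D x0) by (apply HD; lra).
  assert (Hl : f (x0 - e) < y0) by (rewrite <- Hfx0; apply Hincr; auto; lra).
  assert (Hr : y0 < f (x0 + e)) by (rewrite <- Hfx0; apply Hincr; auto; lra).
  exists (Rmin (y0 - f (x0 - e)) (f (x0 + e) - y0)).
  split; [apply Rmin_glb_lt; lra|].
  intros y [_ Hy]. cbn in *. unfold R_dist in *. fold x0.
  assert (Hy1 := Rlt_le_trans _ _ _ Hy (Rmin_l _ _)).
  assert (Hy2 := Rlt_le_trans _ _ _ Hy (Rmin_r _ _)).
  apply Rabs_def2 in Hy1, Hy2.
  destruct (Hinv (x0 - e) (x0 + e) y Dl Dr ltac:(lra)) as [Dy Hfy].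
  apply Rabs_def1.
  - destruct (Rlt_or_le (g y - x0) e) as [|Hge]; [lra|exfalso].
    destruct (Req_dec (g y) (x0 + e)) as [Heq|Hne]; [rewrite Heq in Hfy; lra|].
    assert (f (x0 + e) < f (g y)) by (apply Hincr; auto; lra). lra.
  - destruct (Rlt_or_le (- e) (g y - x0)) as [|Hle]; [lra|exfalso].
    destruct (Req_dec (g y) (x0 - e)) as [Heq|Hne]; [rewrite Heq in Hfy; lra|].
    assert (f (g y) < f (x0 - e)) by (apply Hincr; auto; lra). lra.
Qed.

Lemma vx0 : vx 0 = 1.
Proof. unfold vx. replace (2 * PI * 0 / 3) with 0 by field. apply cos_0. Qed.

Lemma vy0 : vy 0 = 0.
Proof. unfold vy. replace (2 * PI * 0 / 3) with 0 by field. apply sin_0. Qed.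

Lemma vx1 : vx 1 = - / 2.
Proof.
  unfold vx. replace (2 * PI * 1 / 3) with (PI - PI / 3) by field.
  rewrite Rtrigo_facts.cos_pi_minus, cos_PI3. field.
Qed.

Lemma vy1 : vy 1 = sqrt 3 / 2.
Proof.
  unfold vy. replace (2 * PI * 1 / 3) with (PI - PI / 3) by field.
  rewrite sin_PI_x, sin_PI3. reflexivity.
Qed.

Lemma vx2 : vx 2 = - / 2.
Proof.
  unfold vx. replace (2 * PI * 2 / 3) with (PI / 3 + PI) by field.
  rewrite neg_cos, cos_PI3. field.
Qed.

Lemma vy2 : vy 2 = - (sqrt 3 / 2).
Proof.
  unfold vy. replace (2 * PI * 2 / 3) with (PI / 3 + PI) by field.
  rewrite neg_sin, sin_PI3. reflexivity.
Qed.

Lemma xlog3x_nonneg t : 0 <= t -> xlog3x t = t * ln (3 * t).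
Proof.
  intros Ht. unfold xlog3x. destruct (Rle_dec t 0); [|reflexivity].
  replace t with 0 by lra. ring.
Qed.

Definition Fsum (beta r s : R) : R :=
  - / 2 * (1 - s - s / 2) ^ 2 + / beta * xlog3x (1 - s) + r * (1 - s) - r / 2 * s.

Definition Fdiff (beta a d : R) : R :=
  - (3 / 2) * d ^ 2
  + / beta * ((a + d) * ln (3 * (a + d)) + (a - d) * ln (3 * (a - d))).

Lemma F_decomp beta r x1 x2 : 0 < beta -> 0 <= x1 -> 0 <= x2 ->
  F beta (x1, x2) r
  = Fsum beta r (x1 + x2) + Fdiff beta ((x1 + x2) / 2) ((x1 - x2) / 2).
Proof.
  intros Hb H1 H2. unfold F, Fsum, Fdiff; cbn [fst snd].
  rewrite vx0, vy0, vx1, vy1, vx2, vy2, (xlog3x_nonneg x1 H1), (xlog3x_nonneg x2 H2).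
  replace ((x1 + x2) / 2 + (x1 - x2) / 2) with x1 by field.
  replace ((x1 + x2) / 2 - (x1 - x2) / 2) with x2 by field.
  replace (1 - x1 - x2) with (1 - (x1 + x2)) by ring.
  assert (Hsqrt3 : sqrt 3 * sqrt 3 = 3) by (apply sqrt_sqrt; lra).
  replace (((1 - (x1 + x2)) * 0 + x1 * (sqrt 3 / 2) + x2 * - (sqrt 3 / 2)) ^ 2)
    with (sqrt 3 * sqrt 3 * ((x1 - x2) / 2) ^ 2) by field.
  rewrite Hsqrt3. field. lra.
Qed.

Lemma Fdiff_even beta a d : Fdiff beta a (- d) = Fdiff beta a d.
Proof.
  unfold Fdiff. replace (a + - d) with (a - d) by ring.
  replace (a - - d) with (a + d) by ring. ring.
Qed.

Definition Gdiff (beta a d : R) : R := G beta (a + d) - G beta (a - d).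

Lemma Fdiff_derive beta a d : 0 < beta -> - a < d < a ->
  derivable_pt_lim (Fdiff beta a) d (Gdiff beta a d).
Proof.
  intros Hb Hd. apply is_derive_Reals. unfold Fdiff, Gdiff, G.
  auto_derive; [lra|].
  replace (a + - d) with (a - d) by ring.
  rewrite !ln_mult by lra. field. lra.
Qed.

(* Convexity of x log x bounds the gain 2a log (2a / (2a - e)) >= e, while
   the entropy of the small coordinate e contributes e log ((2a - e) / e). *)
Lemma Fdiff_endpoint beta a e : 0 < beta -> 0 < e < a ->
  3 * a * beta <= ln ((2 * a - e) / e) -> Fdiff beta a (a - e) < Fdiff beta a a.
Proof.
  intros Hb He Hlog.
  assert (Hconv : e <= 2 * a * ln (2 * a / (2 * a - e))).
  { assert (Hz := ln_ge_1_sub_inv (2 * a / (2 * a - e)) ltac:(apply Rdiv_lt_0_compat; lra)).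
    replace (1 - / (2 * a / (2 * a - e))) with (e / (2 * a)) in Hz by (field; lra).
    apply (Rmult_le_compat_l (2 * a)) in Hz; [|lra].
    replace (2 * a * (e / (2 * a))) with e in Hz by (field; lra). exact Hz. }
  assert (Hent : 3 * a * e <= / beta * (e * ln ((2 * a - e) / e))).
  { replace (3 * a * e) with (/ beta * (e * (3 * a * beta))) by (field; lra).
    apply Rmult_le_compat_l; [left; apply Rinv_0_lt_compat; lra|].
    apply Rmult_le_compat_l; lra. }
  assert (Hb' : 0 < / beta) by (apply Rinv_0_lt_compat; lra).
  rewrite ln_div in Hconv, Hent by lra.
  unfold Fdiff.
  replace (a + (a - e)) with (2 * a - e) by ring.
  replace (a - (a - e)) with e by ring.
  replace (a + a) with (2 * a) by ring.
  replace (a - a) with 0 by ring.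
  rewrite (ln_mult 3 (2 * a - e)), (ln_mult 3 e), (ln_mult 3 (2 * a)) by lra.
  nra.
Qed.

Lemma Fdiff_endpoint_not_min beta a m : 0 < beta -> 0 <= m < a ->
  exists e, 0 < e < a - m /\ Fdiff beta a (a - e) < Fdiff beta a a.
Proof.
  intros Hb Hm.
  set (E := exp (3 * a * beta)).
  assert (HE : 0 < E) by apply exp_pos.
  set (e := Rmin (2 * a / (1 + E)) ((a - m) / 2)).
  assert (He1 : e <= 2 * a / (1 + E)) by apply Rmin_l.
  assert (He2 : e <= (a - m) / 2) by apply Rmin_r.
  assert (He : 0 < e) by (apply Rmin_glb_lt; [apply Rdiv_lt_0_compat|]; lra).
  exists e. split; [lra|].
  apply Fdiff_endpoint; [lra|lra|].
  rewrite <- (ln_exp (3 * a * beta)). apply ln_le; [apply exp_pos|]. fold E.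
  apply (Rmult_le_reg_r e); [lra|].
  replace ((2 * a - e) / e * e) with (2 * a - e) by (field; lra).
  apply (Rmult_le_compat_r (1 + E)) in He1; [|lra].
  replace (2 * a / (1 + E) * (1 + E)) with (2 * a) in He1 by (field; lra).
  lra.
Qed.

Lemma Fdiff_min_nonneg beta a m : 0 < beta -> 0 <= m < a ->
  (forall d, 0 < d < m -> Gdiff beta a d < 0) ->
  (forall d, m < d < a -> 0 < Gdiff beta a d) ->
  forall d, 0 <= d <= a -> d <> m -> Fdiff beta a m < Fdiff beta a d.
Proof.
  intros Hb Hm Hneg Hpos.
  assert (Hinner : forall d, 0 <= d < a -> d <> m -> Fdiff beta a m < Fdiff beta a d).
  { intros d Hd Hdm. destruct (Rlt_or_le d m) as [Hlt|Hge].
    - apply (deriv_neg_decr _ (Gdiff beta a)); [lra| |].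
      + intros c Hc. apply Fdiff_derive; lra.
      + intros c Hc. apply Hneg. lra.
    - apply (deriv_pos_incr _ (Gdiff beta a)); [lra| |].
      + intros c Hc. apply Fdiff_derive; lra.
      + intros c Hc. apply Hpos. lra. }
  intros d Hd Hdm. destruct (Req_dec d a) as [->|Hda]; [|apply Hinner; lra].
  destruct (Fdiff_endpoint_not_min beta a m Hb Hm) as [e [He Hlt]].
  assert (Fdiff beta a m < Fdiff beta a (a - e)) by (apply Hinner; lra).
  lra.
Qed.

Lemma Fdiff_min beta a m : 0 < beta -> 0 <= m < a ->
  (forall d, 0 < d < m -> Gdiff beta a d < 0) ->
  (forall d, m < d < a -> 0 < Gdiff beta a d) ->
  forall d, - a <= d <= a -> d <> m -> d <> - m -> Fdiff beta a m < Fdiff beta a d.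
Proof.
  intros Hb Hm Hneg Hpos d Hd Hdm Hdm'.
  destruct (Rle_or_lt 0 d).
  - apply (Fdiff_min_nonneg beta a m); auto. lra.
  - rewrite <- (Fdiff_even beta a d). apply (Fdiff_min_nonneg beta a m); auto; lra.
Qed.

Definition dGdiff (beta a d : R) : R := / (beta * (a + d)) + / (beta * (a - d)) - 3.

Lemma Gdiff_0 beta a : Gdiff beta a 0 = 0.
Proof. unfold Gdiff. rewrite Rplus_0_r, Rminus_0_r. ring. Qed.

Lemma Gdiff_derive beta a d : 0 < beta -> - a < d < a ->
  derivable_pt_lim (Gdiff beta a) d (dGdiff beta a d).
Proof.
  intros Hb Hd. apply is_derive_Reals. unfold Gdiff, dGdiff, G.
  auto_derive; [lra|].
  replace (a + - d) with (a - d) by ring. field. lra.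
Qed.

Lemma dGdiff_sign beta a d : 0 < beta -> 0 <= d < a ->
  dGdiff beta a d * (beta * (a * a - d * d)) = 3 * beta * (d * d - a * (a - l beta)).
Proof. intros Hb Hd. unfold dGdiff, l. field. lra. Qed.

Lemma dGdiff_pos beta a d : 0 < beta -> 0 <= d < a ->
  a * (a - l beta) < d * d -> 0 < dGdiff beta a d.
Proof.
  intros Hb Hd Hlt. assert (Hsign := dGdiff_sign beta a d Hb Hd).
  assert (0 < beta * (a * a - d * d)) by (apply Rmult_lt_0_compat; nra).
  nra.
Qed.

Lemma dGdiff_neg beta a d : 0 < beta -> 0 <= d < a ->
  d * d < a * (a - l beta) -> dGdiff beta a d < 0.
Proof.
  intros Hb Hd Hlt. assert (Hsign := dGdiff_sign beta a d Hb Hd).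
  assert (0 < beta * (a * a - d * d)) by (apply Rmult_lt_0_compat; nra).
  nra.
Qed.

Lemma Gdiff_pos_of_le_l beta a : 0 < beta -> 0 < a <= l beta ->
  forall d, 0 < d < a -> 0 < Gdiff beta a d.
Proof.
  intros Hb Ha d Hd. rewrite <- (Gdiff_0 beta a).
  apply (deriv_pos_incr _ (dGdiff beta a)); [lra| |].
  - intros c Hc. apply Gdiff_derive; lra.
  - intros c Hc. apply dGdiff_pos; nra.
Qed.

(* Gdiff decreases on [0, c] and increases on [c, a) with c^2 = a (a - l). *)
Lemma Gdiff_sign_of_root beta a ds : 0 < beta -> 0 < ds < a -> Gdiff beta a ds = 0 ->
  (forall d, 0 < d < ds -> Gdiff beta a d < 0) /\
  (forall d, ds < d < a -> 0 < Gdiff beta a d).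
Proof.
  intros Hb Hds Hroot.
  assert (Hal : l beta < a).
  { destruct (Rlt_or_le (l beta) a) as [|Hle]; [assumption|].
    assert (0 < Gdiff beta a ds) by (apply Gdiff_pos_of_le_l; lra). lra. }
  assert (Hl : 0 < l beta) by (unfold l; apply Rdiv_lt_0_compat; lra).
  set (c := sqrt (a * (a - l beta))).
  assert (Hc2 : c * c = a * (a - l beta)) by (apply sqrt_sqrt; nra).
  assert (Hc : 0 < c) by (apply sqrt_lt_R0; nra).
  assert (Hca : c < a) by nra.
  assert (Hincr : forall x y, c <= x -> x < y -> y < a -> Gdiff beta a x < Gdiff beta a y).
  { intros x y Hx Hxy Hy. apply (deriv_pos_incr _ (dGdiff beta a)); [lra| |].
    - intros t Ht. apply Gdiff_derive; lra.
    - intros t Ht. apply dGdiff_pos; nra. }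
  assert (Hlow : forall d, 0 < d <= c -> Gdiff beta a d < 0).
  { intros d Hd. rewrite <- (Gdiff_0 beta a).
    apply (deriv_neg_decr _ (dGdiff beta a)); [lra| |].
    - intros t Ht. apply Gdiff_derive; lra.
    - intros t Ht. apply dGdiff_neg; nra. }
  assert (Hcds : c < ds).
  { destruct (Rlt_or_le c ds) as [|Hle]; [assumption|].
    assert (Gdiff beta a ds < 0) by (apply Hlow; lra). lra. }
  split.
  - intros d Hd. destruct (Rle_or_lt d c); [apply Hlow; lra|].
    rewrite <- Hroot. apply Hincr; lra.
  - intros d Hd. rewrite <- Hroot. apply Hincr; lra.
Qed.

Lemma F_on_line beta r a z : 0 < beta -> Xi z -> fst z + snd z = 2 * a ->
  F beta z r = Fsum beta r (2 * a) + Fdiff beta a ((fst z - snd z) / 2).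
Proof.
  destruct z as [z1 z2]. intros Hb [Hz1 [Hz2 _]] Hsum. cbn in *.
  rewrite F_decomp, Hsum by assumption.
  replace (2 * a / 2) with a by field. reflexivity.
Qed.

Lemma line_argmin beta r a m (S : pt -> Prop) :
  0 < beta -> 2 * a <= 1 -> 0 <= m < a ->
  (forall z, S z <-> Xi z /\ fst z + snd z = 2 * a) ->
  (forall d, 0 < d < m -> Gdiff beta a d < 0) ->
  (forall d, m < d < a -> 0 < Gdiff beta a d) ->
  forall x, is_argmin S (fun z => F beta z r) x <->
            x = (a + m, a - m) \/ x = (a - m, a + m).
Proof.
  intros Hb Ha Hm HS Hneg Hpos.
  assert (HF : forall z, S z ->
            F beta z r = Fsum beta r (2 * a) + Fdiff beta a ((fst z - snd z) / 2))
    by (intros z Hz; apply HS in Hz as [Hz Hsum]; apply F_on_line; assumption).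
  assert (Hstrict := Fdiff_min beta a m Hb Hm Hneg Hpos).
  assert (Hweak : forall z, S z -> Fdiff beta a m <= Fdiff beta a ((fst z - snd z) / 2)).
  { intros z Hz. apply HS in Hz as [[Hz1 [Hz2 _]] Hsum].
    set (d := (fst z - snd z) / 2).
    destruct (Req_dec d m) as [->|Hdm]; [lra|].
    destruct (Req_dec d (- m)) as [->|Hdm']; [rewrite Fdiff_even; lra|].
    left. apply Hstrict; auto. unfold d. lra. }
  assert (Sp : S (a + m, a - m)) by (apply HS; unfold Xi; cbn; lra).
  assert (Sq : S (a - m, a + m)) by (apply HS; unfold Xi; cbn; lra).
  assert (Fp : F beta (a + m, a - m) r = Fsum beta r (2 * a) + Fdiff beta a m).
  { rewrite (HF _ Sp). cbn. do 3 f_equal. field. }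
  assert (Fq : F beta (a - m, a + m) r = Fsum beta r (2 * a) + Fdiff beta a m).
  { rewrite (HF _ Sq), <- (Fdiff_even beta a m). cbn. do 3 f_equal. field. }
  intros [x1 x2]. split.
  - intros [Sx Hmin]. specialize (Hmin _ Sp). rewrite Fp, (HF _ Sx) in Hmin.
    assert (Sx' := Sx). apply HS in Sx' as [[Hx1 [Hx2 _]] Hsum]. cbn in *.
    set (d := (x1 - x2) / 2) in *.
    destruct (Req_dec d m) as [Hdm|Hdm].
    + left. unfold d in Hdm. f_equal; lra.
    + destruct (Req_dec d (- m)) as [Hdm'|Hdm'].
      * right. unfold d in Hdm'. f_equal; lra.
      * exfalso. assert (Fdiff beta a m < Fdiff beta a d) by (apply Hstrict; auto; unfold d; lra).
        lra.
  - intros [Hx|Hx]; rewrite Hx; split; auto; intros z Sz;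
      rewrite (HF _ Sz); [rewrite Fp|rewrite Fq]; specialize (Hweak z Sz); lra.
Qed.

Section LevelSetsOfG.

Variable beta : R.
Hypothesis hbeta : 2 < beta.

Lemma l_pos : 0 < l beta.
Proof. unfold l. apply Rdiv_lt_0_compat; lra. Qed.

Lemma l_lt_third : l beta < 1 / 3.
Proof.
  unfold l. apply (Rmult_lt_reg_r (3 * beta)); [lra|].
  replace (2 / (3 * beta) * (3 * beta)) with 2 by (field; lra). lra.
Qed.

Lemma G_derive x : 0 < x -> derivable_pt_lim (G beta) x (/ (beta * x) - 3 / 2).
Proof.
  intros Hx. apply is_derive_Reals. unfold G.
  auto_derive; [lra|]. field. lra.
Qed.

Lemma G_continuity_pt x : 0 < x -> continuity_pt (G beta) x.
Proof. intros Hx. eapply derivable_pt_lim_continuity_pt, G_derive, Hx. Qed.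

Lemma G_incr x y : 0 < x -> x < y -> y <= l beta -> G beta x < G beta y.
Proof.
  intros Hx Hxy Hy. apply (deriv_pos_incr _ (fun c => / (beta * c) - 3 / 2)); [lra| |].
  - intros c Hc. apply G_derive. lra.
  - intros c Hc. unfold l in Hy.
    assert (beta * c < 2 / 3).
    { replace (2 / 3) with (beta * (2 / (3 * beta))) by (field; lra).
      apply Rmult_lt_compat_l; lra. }
    assert (/ (2 / 3) < / (beta * c)) by (apply Rinv_lt_contravar; nra).
    lra.
Qed.

Lemma G_decr x y : l beta <= x -> x < y -> G beta y < G beta x.
Proof.
  intros Hx Hxy. assert (Hl := l_pos).
  apply (deriv_neg_decr _ (fun c => / (beta * c) - 3 / 2)); [lra| |].
  - intros c Hc. apply G_derive. lra.
  - intros c Hc. unfold l in Hx.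
    assert (2 / 3 < beta * c).
    { replace (2 / 3) with (beta * (2 / (3 * beta))) by (field; lra).
      apply Rmult_lt_compat_l; lra. }
    assert (/ (beta * c) < / (2 / 3)) by (apply Rinv_lt_contravar; nra).
    lra.
Qed.

Lemma G_le_g x : 0 < x -> G beta x <= g beta.
Proof.
  intros Hx. unfold g. destruct (Rtotal_order x (l beta)) as [Hlt|[->|Hgt]].
  - left. apply G_incr; lra.
  - lra.
  - left. apply G_decr; lra.
Qed.

Lemma H_ex y : y <= g beta -> exists x, 0 < x <= l beta /\ G beta x = y.
Proof.
  intros Hy. assert (Hl := l_pos).
  destruct (Req_dec y (g beta)) as [->|Hne]; [exists (l beta); split; [lra|reflexivity]|].
  set (x0 := Rmin (l beta) (exp (beta * y))).
  assert (Hx0 : 0 < x0) by (apply Rmin_glb_lt; [lra|apply exp_pos]).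
  assert (Hx0l : x0 <= l beta) by apply Rmin_l.
  assert (Gx0 : G beta x0 < y).
  { unfold G. assert (ln x0 <= beta * y).
    { rewrite <- (ln_exp (beta * y)). apply ln_le; [exact Hx0|apply Rmin_r]. }
    assert (/ beta * ln x0 <= y).
    { replace y with (/ beta * (beta * y)) by (field; lra).
      apply Rmult_le_compat_l; [left; apply Rinv_0_lt_compat; lra|assumption]. }
    lra. }
  destruct (Req_dec x0 (l beta)) as [Heq|Hlt]; [unfold g in Hy, Hne; rewrite Heq in Gx0; lra|].
  destruct (IVT_incr (G beta) x0 (l beta) y) as [z [Hz Hgz]]; [lra| |unfold g in *; lra|].
  - intros a Ha. apply G_continuity_pt. lra.
  - exists z. split; [lra|exact Hgz].
Qed.

Lemma K_ex y : y <= g beta -> exists x, l beta <= x /\ G beta x = y.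
Proof.
  intros Hy. assert (Hl := l_pos). assert (Hl3 := l_lt_third).
  destruct (Req_dec y (g beta)) as [->|Hne]; [exists (l beta); split; [lra|reflexivity]|].
  set (x1 := Rmax 1 (- y) + 1).
  assert (Hx1 : 1 < x1 /\ - y < x1) by (assert (H1 := Rmax_l 1 (- y)); assert (H2 := Rmax_r 1 (- y)); unfold x1; lra).
  assert (Gx1 : G beta x1 < y).
  { unfold G. assert (Hln := ln_le_sub1 x1 ltac:(lra)).
    assert (Hib : 0 < / beta < / 2) by (split; [apply Rinv_0_lt_compat|apply Rinv_lt_contravar]; lra).
    assert (/ beta * ln x1 <= / beta * (x1 - 1)) by (apply Rmult_le_compat_l; lra).
    assert (/ beta * (x1 - 1) <= / 2 * (x1 - 1)) by (apply Rmult_le_compat_r; lra).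
    lra. }
  destruct (IVT_decr (G beta) (l beta) x1 y) as [z [Hz Hgz]]; [lra| |unfold g in *; lra|].
  - intros a Ha. apply G_continuity_pt. lra.
  - exists z. split; [lra|exact Hgz].
Qed.

Lemma H_spec y : y <= g beta -> 0 < H beta y <= l beta /\ G beta (H beta y) = y.
Proof. intros Hy. unfold H, the. apply epsilon_spec, H_ex, Hy. Qed.

Lemma K_spec y : y <= g beta -> l beta <= K beta y /\ G beta (K beta y) = y.
Proof. intros Hy. unfold K, the. apply epsilon_spec, K_ex, Hy. Qed.

Lemma H_lt_l y : y < g beta -> H beta y < l beta.
Proof.
  intros Hy. destruct (H_spec y ltac:(lra)) as [[_ [Hlt|Heq]] HG]; [exact Hlt|].
  unfold g in Hy. rewrite Heq in HG. lra.
Qed.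

Lemma K_gt_l y : y < g beta -> l beta < K beta y.
Proof.
  intros Hy. destruct (K_spec y ltac:(lra)) as [[Hlt|Heq] HG]; [exact Hlt|].
  unfold g in Hy. rewrite <- Heq in HG. lra.
Qed.

Lemma H_g : H beta (g beta) = l beta.
Proof.
  destruct (H_spec (g beta) ltac:(lra)) as [[Hpos [Hlt|Heq]] HG]; [exfalso|exact Heq].
  assert (G beta (H beta (g beta)) < G beta (l beta)) by (apply G_incr; lra).
  unfold g in *. lra.
Qed.

Lemma K_g : K beta (g beta) = l beta.
Proof.
  destruct (K_spec (g beta) ltac:(lra)) as [[Hlt|Heq] HG]; [exfalso|auto].
  assert (G beta (K beta (g beta)) < G beta (l beta)) by (apply G_decr; lra).
  unfold g in *. lra.
Qed.

Lemma K_lt x y : l beta <= x -> G beta x < y -> y <= g beta -> K beta y < x.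
Proof.
  intros Hx Hxy Hy. destruct (K_spec y Hy) as [HK HG].
  destruct (Rlt_or_le (K beta y) x) as [|Hle]; [assumption|exfalso].
  destruct (Req_dec x (K beta y)) as [Heq|Hne]; [rewrite <- Heq in HG; lra|].
  assert (G beta (K beta y) < G beta x) by (apply G_decr; lra). lra.
Qed.

Lemma lt_K x y : l beta <= x -> y < G beta x -> x < K beta y.
Proof.
  intros Hx Hxy. assert (Hl := l_pos).
  destruct (K_spec y ltac:(assert (G beta x <= g beta) by (apply G_le_g; lra); lra)) as [HK HG].
  destruct (Rlt_or_le x (K beta y)) as [|Hle]; [assumption|exfalso].
  destruct (Req_dec x (K beta y)) as [Heq|Hne]; [rewrite <- Heq in HG; lra|].
  assert (G beta x < G beta (K beta y)) by (apply G_decr; lra). lra.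
Qed.

Lemma H_continuity_pt y0 : y0 < g beta -> continuity_pt (H beta) y0.
Proof.
  intros Hy0. assert (Hl := l_pos).
  destruct (H_spec y0 ltac:(lra)) as [[Hpos _] HG]. assert (Hlt := H_lt_l y0 Hy0).
  apply (continuity_pt_inverse (G beta) (H beta) (fun x => 0 < x <= l beta) y0
           (Rmin (H beta y0) (l beta - H beta y0))); [apply Rmin_glb_lt; lra| |exact HG| |].
  - intros x Hx. assert (Hm1 := Rmin_l (H beta y0) (l beta - H beta y0)).
    assert (Hm2 := Rmin_r (H beta y0) (l beta - H beta y0)).
    lra.
  - intros x x' Hx Hx' Hxx'. apply G_incr; lra.
  - intros x x' y Hx Hx' Hy.
    apply H_spec. assert (G beta x' <= g beta) by (apply G_le_g; lra). lra.
Qed.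

Lemma K_continuity_pt y0 : y0 < g beta -> continuity_pt (K beta) y0.
Proof.
  intros Hy0. assert (Hl := l_pos).
  assert (Hc : continuity_pt (fun y => K beta (- y)) (- y0)).
  { rewrite <- (Ropp_involutive y0) in Hy0.
    destruct (K_spec (- - y0) ltac:(lra)) as [_ HG]. assert (Hgt := K_gt_l (- - y0) Hy0).
    apply (continuity_pt_inverse (fun x => - G beta x) (fun y => K beta (- y))
             (fun x => l beta <= x) (- y0) (K beta (- - y0) - l beta));
      cbn; [lra|intros x Hx; lra|lra| |].
    - intros x x' Hx Hx' Hxx'. assert (G beta x' < G beta x) by (apply G_decr; lra). lra.
    - intros x x' y Hx Hx' Hy. rewrite <- (Ropp_involutive y) in Hy.
      destruct (K_spec (- y)) as [HK HGy]; [|split; [exact HK|lra]].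
      assert (G beta x <= g beta) by (apply G_le_g; lra). lra. }
  apply (continuity_pt_ext (comp (fun y => K beta (- y)) Ropp)).
  - intros y. unfold comp. now rewrite Ropp_involutive.
  - apply continuity_pt_comp; [apply continuity_pt_opp, continuity_pt_id|exact Hc].
Qed.

End LevelSetsOfG.

Section BelowR1.

Variable beta : R.
Hypothesis hbeta : 2 < beta.

Definition Phi (r y : R) : R := K beta (y - 3 * r / 2) + H beta y + K beta y.

Lemma G_one_sub_2l : G beta (1 - 2 * l beta) = g beta - 3 * r1 beta / 2.
Proof.
  assert (Hl := l_pos beta hbeta). assert (Hl3 := l_lt_third beta hbeta).
  assert (Hratio : 3 * beta / 2 - 2 = (1 - 2 * l beta) / l beta) by (unfold l; field; lra).
  unfold r1, g, G. rewrite Hratio, ln_div by lra. unfold l. field. lra.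
Qed.

Lemma Phi_continuity_pt r y : 0 < r -> y < g beta -> continuity_pt (Phi r) y.
Proof.
  intros Hr Hy. unfold Phi.
  repeat apply continuity_pt_plus.
  - apply (continuity_pt_comp (fun y => y - 3 * r / 2) (K beta)).
    + apply continuity_pt_minus; [apply continuity_pt_id|apply continuity_pt_const].
      intros ? ?; reflexivity.
    + apply K_continuity_pt; [exact hbeta|lra].
  - apply H_continuity_pt; assumption.
  - apply K_continuity_pt; assumption.
Qed.

Lemma Phi_gt_1 r y : 0 < r -> y < G beta 1 -> 1 < Phi r y.
Proof.
  intros Hr Hy. assert (Hl := l_pos beta hbeta). assert (Hl3 := l_lt_third beta hbeta).
  assert (Hg : y < g beta) by (assert (G beta 1 <= g beta) by (apply G_le_g; lra); lra).
  assert (HK1 : 1 < K beta y) by (apply lt_K; lra).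
  assert (HK2 : l beta <= K beta (y - 3 * r / 2)) by (apply K_spec; lra).
  assert (HH : 0 < H beta y) by (apply H_spec; lra).
  unfold Phi. lra.
Qed.

(* Below r1 the value K (g - 3r/2) leaves room e below 1 - 2l, and taking y
   close enough to g puts each K-term within e of its limit. *)
Lemma Phi_lt_1_below_g r : 0 < r < r1 beta -> exists y, y < g beta /\ Phi r y < 1.
Proof.
  intros Hr. assert (Hl := l_pos beta hbeta). assert (Hl3 := l_lt_third beta hbeta).
  set (c0 := K beta (g beta - 3 * r / 2)).
  destruct (K_spec beta hbeta (g beta - 3 * r / 2) ltac:(lra)) as [Hc0 Gc0]. fold c0 in Hc0, Gc0.
  assert (Hc1 : c0 < 1 - 2 * l beta)
    by (apply (K_lt beta hbeta); [|rewrite G_one_sub_2l|]; lra).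
  set (e := (1 - c0 - 2 * l beta) / 3).
  assert (He : 0 < e) by (unfold e; lra).
  set (ymax := Rmax (G beta (l beta + e)) (G beta (c0 + e) + 3 * r / 2)).
  assert (Hm1 : G beta (l beta + e) <= ymax) by apply Rmax_l.
  assert (Hm2 : G beta (c0 + e) + 3 * r / 2 <= ymax) by apply Rmax_r.
  assert (Hmg : ymax < g beta).
  { apply Rmax_lub_lt.
    - apply G_decr; lra.
    - assert (G beta (c0 + e) < G beta c0) by (apply G_decr; lra). lra. }
  exists ((ymax + g beta) / 2). split; [lra|].
  assert (HK1 : K beta ((ymax + g beta) / 2) < l beta + e) by (apply K_lt; lra).
  assert (HK2 : K beta ((ymax + g beta) / 2 - 3 * r / 2) < c0 + e) by (apply K_lt; lra).
  assert (HH : H beta ((ymax + g beta) / 2) <= l beta) by (apply H_spec; lra).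
  unfold Phi, e in *. lra.
Qed.

Lemma y1_ex r : 0 < r < r1 beta ->
  exists y, y <= g beta /\ K beta (y - 3 * r / 2) + H beta y + K beta y = 1.
Proof.
  intros Hr. destruct (Phi_lt_1_below_g r Hr) as [yh [Hyh HPhi]].
  set (yl := Rmin (G beta 1) yh - 1).
  assert (Hyl : yl < G beta 1 /\ yl < yh)
    by (assert (Hm1 := Rmin_l (G beta 1) yh); assert (Hm2 := Rmin_r (G beta 1) yh); unfold yl; lra).
  destruct (IVT_decr (Phi r) yl yh 1) as [y [Hy HPy]]; [lra| |split; [exact HPhi|apply Phi_gt_1; lra]|].
  - intros a Ha. apply Phi_continuity_pt; lra.
  - exists y. split; [lra|exact HPy].
Qed.

Lemma y1_spec r : 0 < r < r1 beta ->
  y1 beta r <= g beta /\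
  K beta (y1 beta r - 3 * r / 2) + H beta (y1 beta r) + K beta (y1 beta r) = 1.
Proof. intros Hr. unfold y1, the. apply epsilon_spec, y1_ex, Hr. Qed.

Lemma y1_lt_g r : 0 < r < r1 beta -> y1 beta r < g beta.
Proof.
  intros Hr. destruct (y1_spec r Hr) as [[Hlt|Heq] Hsum]; [exact Hlt|exfalso].
  rewrite Heq, H_g, K_g in Hsum by exact hbeta.
  destruct (K_spec beta hbeta (g beta - 3 * r / 2) ltac:(lra)) as [_ HG].
  replace (K beta (g beta - 3 * r / 2)) with (1 - 2 * l beta) in HG by lra.
  rewrite G_one_sub_2l in HG. lra.
Qed.

Lemma lline1_argmin r : 0 < r < r1 beta ->
  forall x, is_argmin (lline1 beta r) (fun z => F beta z r) x <->
            x = sigma1 beta r \/ x = sigma2 beta r.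
Proof.
  intros Hr. assert (Hl := l_pos beta hbeta).
  assert (Hy := y1_lt_g r Hr). destruct (y1_spec r Hr) as [_ Hsum].
  unfold sigma1, sigma2, lline1. set (y := y1 beta r) in *.
  assert (Hh := H_lt_l beta hbeta y Hy). assert (Hk := K_gt_l beta hbeta y Hy).
  destruct (H_spec beta hbeta y ltac:(lra)) as [[Hh0 _] GH].
  destruct (K_spec beta hbeta y ltac:(lra)) as [_ GK].
  assert (HK' : l beta <= K beta (y - 3 * r / 2)) by (apply K_spec; lra).
  set (a := (H beta y + K beta y) / 2). set (m := (K beta y - H beta y) / 2).
  assert (Hp : a + m = K beta y) by (unfold a, m; field).
  assert (Hq : a - m = H beta y) by (unfold a, m; field).
  assert (Hroot : Gdiff beta a m = 0) by (unfold Gdiff; rewrite Hp, Hq; lra).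
  destruct (Gdiff_sign_of_root beta a m ltac:(lra) ltac:(unfold a, m; lra) Hroot) as [Hneg Hpos].
  intros x. rewrite (line_argmin beta r a m); try assumption; try lra.
  - rewrite Hp, Hq. tauto.
  - intros z. unfold a. replace (2 * ((H beta y + K beta y) / 2)) with (H beta y + K beta y) by field.
    tauto.
Qed.

End BelowR1.

Definition log_ratio (t : R) : R := ln ((1 - 2 * t) / t).

Lemma log_ratio_pos t : 0 < t < 1 / 3 -> 0 < log_ratio t.
Proof.
  intros Ht. unfold log_ratio. rewrite <- ln_1. apply ln_increasing; [lra|].
  apply (Rmult_lt_reg_r t); [lra|]. field_simplify; lra.
Qed.

Lemma log_ratio_third : log_ratio (1 / 3) = 0.
Proof. unfold log_ratio. replace ((1 - 2 * (1 / 3)) / (1 / 3)) with 1 by field. apply ln_1. Qed.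

Lemma h_derive t : 0 < t < 1 / 2 -> derivable_pt_lim h t (-3 * (1 - 4 * t) * log_ratio t).
Proof.
  intros Ht. apply is_derive_Reals. unfold h, log_ratio.
  auto_derive.
  - split; [lra|split; [|exact I]].
    apply Rmult_lt_0_compat; [lra|apply Rinv_0_lt_compat; lra].
  - replace ((1 + - (2 * t)) * / t) with ((1 - 2 * t) / t) by (unfold Rdiv; ring).
    field. lra.
Qed.

Lemma h_continuity_pt t : 0 < t < 1 / 2 -> continuity_pt h t.
Proof. intros Ht. eapply derivable_pt_lim_continuity_pt, h_derive, Ht. Qed.

Lemma h_decr x y : 0 < x -> x < y -> y <= 1 / 4 -> h y < h x.
Proof.
  intros Hx Hxy Hy. apply (deriv_neg_decr _ (fun t => -3 * (1 - 4 * t) * log_ratio t)); [lra| |].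
  - intros c Hc. apply h_derive. lra.
  - intros c Hc. assert (0 < log_ratio c) by (apply log_ratio_pos; lra). nra.
Qed.

Lemma h_incr x y : 1 / 4 <= x -> x < y -> y <= 1 / 3 -> h x < h y.
Proof.
  intros Hx Hxy Hy. apply (deriv_pos_incr _ (fun t => -3 * (1 - 4 * t) * log_ratio t)); [lra| |].
  - intros c Hc. apply h_derive. lra.
  - intros c Hc. assert (0 < log_ratio c) by (apply log_ratio_pos; lra). nra.
Qed.

Lemma h_pos_lt_quarter t : t < 1 / 3 -> 0 < h t -> t < 1 / 4.
Proof.
  intros Ht Hh. destruct (Rlt_or_le t (1 / 4)) as [|Hge]; [assumption|exfalso].
  assert (Hthird : h (1 / 3) = 0).
  { unfold h. fold (log_ratio (1 / 3)). rewrite log_ratio_third. field. }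
  assert (h t < h (1 / 3)) by (apply h_incr; lra). lra.
Qed.

(* At t = q^2 with q = (1 - r) / 12, log ((1 - 2t) / t) <= 2 log (1 / q) < 2 / q
   makes h (t) > 1 - 12 q = r. *)
Lemma h_gt_near_0 r : 0 < r < 1 -> r < h (((1 - r) / 12) ^ 2).
Proof.
  intros Hr. set (q := (1 - r) / 12). assert (Hq : 0 < q < 1 / 12) by (unfold q; lra).
  set (t := q ^ 2).
  assert (Ht : 0 < t) by (unfold t; nra).
  assert (Hlog : log_ratio t < 2 / q).
  { unfold log_ratio.
    assert (Hle : ln ((1 - 2 * t) / t) <= ln (/ q * / q)).
    { apply ln_le; [apply Rdiv_lt_0_compat; unfold t in *; nra|].
      unfold t. replace (/ q * / q) with (1 / q ^ 2) by (field; lra).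
      apply Rmult_le_compat_r; [left; apply Rinv_0_lt_compat; nra|nra]. }
    rewrite ln_mult in Hle by (apply Rinv_0_lt_compat; lra).
    assert (Hinv := ln_le_sub1 (/ q) ltac:(apply Rinv_0_lt_compat; lra)).
    unfold Rdiv. lra. }
  unfold h. fold (log_ratio t).
  assert (Hpos : 0 < log_ratio t) by (apply log_ratio_pos; split; [exact Ht|unfold t; nra]).
  assert (t * log_ratio t < t * (2 / q)) by (apply Rmult_lt_compat_l; assumption).
  assert (Hq2 : t * (2 / q) = 2 * q) by (unfold t; field; lra).
  assert (3 * t <= q) by (unfold t, q in *; nra).
  assert (0 <= t * t * log_ratio t) by (apply Rmult_le_pos; [nra|lra]).
  assert (r = 1 - 12 * q) by (unfold q; field).
  nra.
Qed.

Lemma m0_ex r : 0 < r < 1 -> exists t, 0 < t < k r /\ h t = r.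
Proof.
  intros Hr. set (t0 := ((1 - r) / 12) ^ 2).
  assert (Ht0 : 0 < t0 < k r) by (unfold t0, k; split; nra).
  assert (Hk : k r < 1 / 3) by (unfold k; lra).
  assert (Hhk : h (k r) < r).
  { assert (0 < log_ratio (k r)) by (apply log_ratio_pos; unfold k; lra).
    unfold h. fold (log_ratio (k r)).
    assert (0 < k r * (1 - 2 * k r) * log_ratio (k r)) by (apply Rmult_lt_0_compat; [unfold k; nra|lra]).
    unfold k in *. lra. }
  destruct (IVT_decr h t0 (k r) r) as [t [Ht Hht]]; [lra| |split; [exact Hhk|apply h_gt_near_0; lra]|].
  - intros a Ha. apply h_continuity_pt. lra.
  - exists t. split; [lra|exact Hht].
Qed.

Lemma m0_spec r : 0 < r < 1 -> 0 < m0 r < k r /\ h (m0 r) = r.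
Proof. intros Hr. unfold m0, the. apply epsilon_spec, m0_ex, Hr. Qed.

Lemma m0_lt r t : 0 < r < 1 -> 0 < t -> h t < r -> m0 r < t.
Proof.
  intros Hr Ht Hh. destruct (m0_spec r Hr) as [[Hm0 Hm0k] Hhm0].
  assert (Hm0q : m0 r < 1 / 4) by (apply h_pos_lt_quarter; unfold k in *; lra).
  destruct (Rlt_or_le (m0 r) t) as [|Hle]; [assumption|exfalso].
  destruct (Req_dec t (m0 r)) as [Heq|Hne]; [rewrite Heq in Hh; lra|].
  assert (h (m0 r) < h t) by (apply h_decr; lra). lra.
Qed.

Section AboveR1.

Variable beta : R.
Hypothesis hbeta : 2 < beta.

Definition r_at (t : R) : R := 1 - 3 * t - l beta * log_ratio t.

(* The smaller root of 3t (1 - 2t) = l, where h and r_at meet. *)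
Definition tstar : R := (1 - sqrt (1 - 8 * l beta / 3)) / 4.

Lemma f_eq_of_r_at r t : 0 < t < 1 / 3 -> r_at t = r -> Defs.f r t = beta.
Proof.
  intros Ht Hr. assert (Hlog := log_ratio_pos t Ht). unfold Defs.f. fold (log_ratio t).
  replace (1 - r - 3 * t) with (l beta * log_ratio t) by (rewrite <- Hr; unfold r_at; ring).
  unfold l. field. lra.
Qed.

Lemma r_at_of_f_eq r t : 0 < t < k r -> Defs.f r t = beta -> r_at t = r.
Proof.
  intros Ht Hf. unfold Defs.f in Hf. fold (log_ratio t) in Hf. unfold k in Ht.
  assert (Hlog : log_ratio t = 3 * beta / 2 * (1 - r - 3 * t)) by (rewrite <- Hf; field; lra).
  unfold r_at, l. rewrite Hlog. field. lra.
Qed.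

Lemma h_sub_r_at t : h t - r_at t = log_ratio t * (l beta - 3 * t * (1 - 2 * t)).
Proof. unfold h, r_at, log_ratio. ring. Qed.

Lemma r_at_derive t : 0 < t < 1 / 2 ->
  derivable_pt_lim r_at t (-3 + l beta / (t * (1 - 2 * t))).
Proof.
  intros Ht. apply is_derive_Reals. unfold r_at, log_ratio.
  auto_derive.
  - split; [lra|split; [|exact I]].
    apply Rmult_lt_0_compat; [lra|apply Rinv_0_lt_compat; lra].
  - field. lra.
Qed.

Lemma r_at_continuity_pt t : 0 < t < 1 / 2 -> continuity_pt r_at t.
Proof. intros Ht. eapply derivable_pt_lim_continuity_pt, r_at_derive, Ht. Qed.

Lemma tstar_spec : 3 * tstar * (1 - 2 * tstar) = l beta /\ 0 < tstar < 1 / 6.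
Proof.
  assert (Hl := l_pos beta hbeta). assert (Hl3 := l_lt_third beta hbeta).
  unfold tstar. set (w := 1 - 8 * l beta / 3).
  assert (Hsq : sqrt w * sqrt w = w) by (apply sqrt_sqrt; unfold w; lra).
  assert (Hsq0 : 0 <= sqrt w) by apply sqrt_pos.
  split.
  - replace (3 * ((1 - sqrt w) / 4) * (1 - 2 * ((1 - sqrt w) / 4)))
      with (3 * (1 - sqrt w * sqrt w) / 8) by field.
    rewrite Hsq. unfold w. field.
  - assert (sqrt w < 1) by (unfold w in *; nra).
    assert (1 / 3 < sqrt w) by (unfold w in *; nra).
    lra.
Qed.

Lemma tstar_lt_quad t : tstar < t <= 1 / 3 -> l beta < 3 * t * (1 - 2 * t).
Proof.
  intros Ht. destruct tstar_spec as [Hroot Hts].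
  assert (Hfactor : 3 * t * (1 - 2 * t) - l beta = -6 * (t - tstar) * (t - (1 / 2 - tstar)))
    by (rewrite <- Hroot; field).
  nra.
Qed.

Lemma r_at_decr x y : tstar <= x -> x < y -> y <= 1 / 3 -> r_at y < r_at x.
Proof.
  intros Hx Hxy Hy. destruct tstar_spec as [_ Hts].
  apply (deriv_neg_decr _ (fun t => -3 + l beta / (t * (1 - 2 * t)))); [lra| |].
  - intros c Hc. apply r_at_derive. lra.
  - intros c Hc. assert (Hquad := tstar_lt_quad c ltac:(lra)).
    assert (Hpos : 0 < c * (1 - 2 * c)) by nra.
    enough (l beta / (c * (1 - 2 * c)) < 3) by lra.
    apply (Rmult_lt_reg_r (c * (1 - 2 * c))); [exact Hpos|].
    field_simplify; lra.
Qed.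

Lemma r_at_l : r_at (l beta) = r1 beta.
Proof.
  unfold r_at, r1, log_ratio, l.
  replace ((1 - 2 * (2 / (3 * beta))) / (2 / (3 * beta))) with (3 * beta / 2 - 2) by (field; lra).
  field. lra.
Qed.

Lemma tstar_lt_l : tstar < l beta.
Proof.
  assert (Hl := l_pos beta hbeta). assert (Hl3 := l_lt_third beta hbeta).
  destruct tstar_spec as [Hroot Hts].
  assert (Hfactor : 3 * l beta * (1 - 2 * l beta) - l beta
                    = -6 * (l beta - tstar) * (l beta - (1 / 2 - tstar)))
    by (rewrite <- Hroot; field).
  assert (l beta < 3 * l beta * (1 - 2 * l beta)) by nra.
  nra.
Qed.

Lemma r1_pos : 0 < r1 beta.
Proof.
  assert (Hthird : r_at (1 / 3) = 0) by (unfold r_at; rewrite log_ratio_third; field).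
  rewrite <- r_at_l, <- Hthird.
  assert (Hl3 := l_lt_third beta hbeta). assert (Htl := tstar_lt_l).
  apply r_at_decr; lra.
Qed.

Lemma r1_lt_r_at_tstar : r1 beta < r_at tstar.
Proof.
  rewrite <- r_at_l. assert (Hl3 := l_lt_third beta hbeta).
  apply r_at_decr; [lra|apply tstar_lt_l|lra].
Qed.

Lemma r_at_tstar_lt_1 : r_at tstar < 1.
Proof.
  destruct tstar_spec as [_ Hts]. assert (Hl := l_pos beta hbeta).
  assert (0 < log_ratio tstar) by (apply log_ratio_pos; lra).
  unfold r_at. nra.
Qed.

Lemma m0_r_at_tstar : m0 (r_at tstar) = tstar.
Proof.
  destruct tstar_spec as [Hroot Hts].
  assert (Hr : 0 < r_at tstar < 1)
    by (assert (Hr1 := r1_pos); assert (Hr2 := r1_lt_r_at_tstar); assert (Hr3 := r_at_tstar_lt_1); lra).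
  assert (Hh : h tstar = r_at tstar)
    by (assert (Hsub := h_sub_r_at tstar); rewrite Hroot, Rminus_diag, Rmult_0_r in Hsub; lra).
  destruct (m0_spec _ Hr) as [[Hm0 Hm0k] Hhm0].
  assert (Hq : m0 (r_at tstar) < 1 / 4) by (apply h_pos_lt_quarter; unfold k in *; lra).
  destruct (Rtotal_order (m0 (r_at tstar)) tstar) as [Hlt|[Heq|Hgt]]; [exfalso|exact Heq|exfalso].
  - assert (h tstar < h (m0 (r_at tstar))) by (apply h_decr; lra). lra.
  - assert (h (m0 (r_at tstar)) < h tstar) by (apply h_decr; lra). lra.
Qed.

Lemma r2_ex : exists r, 0 < r < 1 /\ Defs.f r (m0 r) = beta.
Proof.
  exists (r_at tstar). destruct tstar_spec as [_ Hts].
  assert (Hr1 := r1_pos). assert (Hr2 := r1_lt_r_at_tstar). assert (Hr3 := r_at_tstar_lt_1).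
  split; [lra|]. rewrite m0_r_at_tstar. apply f_eq_of_r_at; [lra|reflexivity].
Qed.

(* On (0, 1/3), h t = r_at t forces 3t (1 - 2t) = l, i.e. t = tstar. *)
Lemma r2_eq : r2 beta = r_at tstar.
Proof.
  assert (Hspec : 0 < r2 beta < 1 /\ Defs.f (r2 beta) (m0 (r2 beta)) = beta)
    by (unfold r2, the; apply epsilon_spec, r2_ex).
  destruct Hspec as [Hr Hf]. set (r := r2 beta) in *.
  destruct (m0_spec r Hr) as [Hm0 Hhm0]. set (s := m0 r) in *.
  assert (Hs3 : s < 1 / 3) by (unfold k in Hm0; lra).
  assert (Hrs := r_at_of_f_eq r s Hm0 Hf).
  assert (Hsub := h_sub_r_at s). rewrite Hhm0, Hrs, Rminus_diag in Hsub.
  assert (Hlog := log_ratio_pos s ltac:(lra)).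
  assert (Hquad : 3 * s * (1 - 2 * s) = l beta).
  { destruct (Rmult_integral _ _ (eq_sym Hsub)) as [|Hz]; lra. }
  destruct tstar_spec as [Hroot Hts].
  assert (Hs : s = tstar).
  { assert (Hprod : (s - tstar) * (s - (1 / 2 - tstar)) = 0) by nra.
    destruct (Rmult_integral _ _ Hprod); lra. }
  rewrite <- Hs. symmetry. exact Hrs.
Qed.

Lemma u_ex r : r1 beta < r < r2 beta -> exists t, m0 r < t < k r /\ Defs.f r t = beta.
Proof.
  rewrite r2_eq. intros Hr.
  assert (Hr1 := r1_pos). assert (Hr3 := r_at_tstar_lt_1).
  destruct tstar_spec as [_ Hts]. assert (Hl3 := l_lt_third beta hbeta).
  assert (Htl := tstar_lt_l).
  destruct (IVT_decr r_at tstar (l beta) r) as [t [Ht Hrt]]; [lra| |rewrite r_at_l; lra|].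
  - intros a Ha. apply r_at_continuity_pt. lra.
  - assert (Hlog := log_ratio_pos t ltac:(lra)).
    assert (Hl0 := l_pos beta hbeta).
    exists t. split; [split|].
    + apply m0_lt; [lra|lra|].
      assert (Hsub := h_sub_r_at t). assert (Hquad := tstar_lt_quad t ltac:(lra)).
      assert (log_ratio t * (l beta - 3 * t * (1 - 2 * t)) < 0) by nra. lra.
    + unfold k. unfold r_at in Hrt. nra.
    + apply f_eq_of_r_at; lra.
Qed.

Lemma u_pos_le_l r : r1 beta < r < r2 beta -> 0 < u beta r <= l beta.
Proof.
  intros Hr. assert (Hr01 : 0 < r < 1)
    by (assert (Hr1 := r1_pos); assert (Hr3 := r_at_tstar_lt_1); rewrite r2_eq in Hr; lra).
  assert (Hspec : m0 r < u beta r < k r /\ Defs.f r (u beta r) = beta)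
    by (unfold u, the; apply epsilon_spec, u_ex, Hr).
  destruct Hspec as [[Hm0u Huk] Hf]. destruct (m0_spec r Hr01) as [[Hm0 _] _].
  assert (Hru := r_at_of_f_eq r (u beta r) ltac:(lra) Hf).
  split; [lra|].
  destruct (Rle_or_lt (u beta r) (l beta)) as [|Hlt]; [assumption|exfalso].
  assert (Htl := tstar_lt_l).
  assert (r_at (u beta r) < r_at (l beta)) by (apply r_at_decr; unfold k in Huk; lra).
  rewrite r_at_l in *. lra.
Qed.

Lemma lline2_argmin r : r1 beta < r < r2 beta ->
  forall x, is_argmin (lline2 beta r) (fun z => F beta z r) x <-> x = p beta r.
Proof.
  intros Hr x. assert (Hu := u_pos_le_l r Hr). assert (Hl3 := l_lt_third beta hbeta).
  rewrite (line_argmin beta r (u beta r) 0 (lline2 beta r)); [|lra|lra|lra|reflexivity|intros; lra|].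
  - unfold p. rewrite Rplus_0_r, Rminus_0_r. tauto.
  - apply Gdiff_pos_of_le_l; lra.
Qed.

End AboveR1.

Theorem lemma5p11 (beta : R) (hbeta : 2 < beta) :
  (forall r, 0 < r < r1 beta ->
     forall x, is_argmin (lline1 beta r) (fun z => F beta z r) x <->
               x = sigma1 beta r \/ x = sigma2 beta r) /\
  (forall r, r1 beta < r < r2 beta ->
     forall x, is_argmin (lline2 beta r) (fun z => F beta z r) x <->
               x = p beta r).
Proof.
  split.
  - exact (lline1_argmin beta hbeta).
  - exact (lline2_argmin beta hbeta).
Qed.
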